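(* Every Lucasian GNS is $\mathbf P$-Green: for every prime $p$, every power $m$ of $p$, and all $a,b\mid m$, one has $s(m)\equiv\frac m\ell\frac{s(a)s(b)}{s(g)}\bmod s(a)s(b)$, where $g=\gcd(a,b)$, $\ell=\operatorname{lcm}(a,b)$.
   Context: A GNS over a ring $D$ is $s\colon\mathbf N\to D$ with $s(0)=0$, $s(n)$ a non-zero-divisor for $n>0$, and $s(n-k)\mid s(n)-s(k)$ for $n>k>0$. It is Lucasian if $s(a+b)\equiv s(a)+s(b)\bmod s(a)s(b)$ for all $a,b$. $\mathbf P$-Green means $\mathcal F$-Green for $\mathcal F=\bigcup_p p^{\mathbf N}$ (prime powers), where $\mathcal F$-Green means the displayed congruence holds for all $m\in\mathcal F$ and $a,b\mid m$. *)

From mathcomp Require Import all_boot all_order all_algebra.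
Set Implicit Arguments. Unset Strict Implicit. Unset Printing Implicit Defensive.
Import GRing.Theory.
Local Open Scope ring_scope.

Definition rdvd (D : comPzRingType) (x y : D) : Prop := exists c : D, y = c * x.

Definition nzd (D : comPzRingType) (x : D) : Prop := forall y : D, x * y = 0 -> y = 0.

Definition rcong (D : comPzRingType) (x y z : D) : Prop := rdvd z (x - y).

Definition GNS (D : comPzRingType) (s : nat -> D) : Prop :=
  [/\ s 0%N = 0,
      (forall n, (0 < n)%N -> nzd (s n)) &
      (forall n k, (0 < k)%N -> (k < n)%N -> rdvd (s (n - k)%N) (s n - s k))].

Definition Lucasian (D : comPzRingType) (s : nat -> D) : Prop :=
  GNS s /\ forall a b : nat, rcong (s (a + b)%N) (s a + s b) (s a * s b).

(* The quotient s(a)s(b)/s(g) is expressed as an element q with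
   q * s(g) = s(a) s(b) (unique since s(g) is a non-zero-divisor). *)
Definition PGreen (D : comPzRingType) (s : nat -> D) : Prop :=
  forall p k a b : nat, prime p -> (a %| p ^ k)%N -> (b %| p ^ k)%N ->
    exists q : D, q * s (gcdn a b) = s a * s b /\
      rcong (s (p ^ k)%N) (((p ^ k) %/ lcmn a b)%N%:R * q) (s a * s b).

From mathcomp Require Import all_boot all_order all_algebra.
From mathcomp Require Import ring.
Import GRing.Theory.

Set Implicit Arguments.
Unset Strict Implicit.
Unset Printing Implicit Defensive.

(* Iterating
   s(x + b) = s(x) + s(b) (mod s(x) s(b)) gives s(b) | s(c b) and
   s(c b) = c s(b) (mod s(b)^2); when a | b the modulus s(a) s(b) divides
   s(b)^2.  The divisors of a prime power are totally ordered by
   divisibility, and for a | b we have g = a, l = b, so the quotient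
   s(a) s(b) / s(g) is just s(b). *)

Local Open Scope ring_scope.

Lemma dvdn_pfactor_total (p k a b : nat) : prime p ->
  (a %| p ^ k)%N -> (b %| p ^ k)%N -> (a %| b)%N || (b %| a)%N.
Proof.
move=> pp /(dvdn_pfactor _ _ pp)[i _ ->] /(dvdn_pfactor _ _ pp)[j _ ->].
by apply/orP; case: (leqP i j) => [le_ij | /ltnW le_ji]; [left | right];
  apply: dvdn_exp2l.
Qed.

Section LucasCongruence.
Variables (D : comPzRingType) (s : nat -> D).
Hypothesis s0 : s 0%N = 0.
Hypothesis lucas : forall a b : nat, rcong (s (a + b)%N) (s a + s b) (s a * s b).

Lemma lucas_rdvd_mul (a c : nat) : rdvd (s a) (s (c * a)%N).
Proof.
elim: c => [|c [f def_sca]]; first by exists 0; rewrite mul0n s0 mul0r.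
have [e def_err] := lucas (c * a) a.
exists (e * f * s a + f + 1).
have -> : s (c.+1 * a)%N =
    (s (c * a + a)%N - (s (c * a)%N + s a)) + s (c * a)%N + s a.
  by rewrite mulSn addnC; ring.
by rewrite def_err def_sca; ring.
Qed.

Lemma lucas_mul_cong (b c : nat) : rcong (s (c * b)%N) (c%:R * s b) (s b * s b).
Proof.
elim: c => [|c [g def_rem]]; first by exists 0; rewrite mul0n s0 !mul0r subr0.
have [e def_err] := lucas (c * b) b.
have [f def_scb] := lucas_rdvd_mul b c.
exists (e * f + g).
have -> : s (c.+1 * b)%N - c.+1%:R * s b =
    (s (c * b + b)%N - (s (c * b)%N + s b)) + (s (c * b)%N - c%:R * s b).
  by rewrite mulSn addnC -addn1 natrD; ring.
by rewrite def_err def_rem def_scb; ring.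
Qed.

Lemma lucas_mul_cong_dvd (a b c : nat) : (a %| b)%N ->
  rcong (s (c * b)%N) (c%:R * s b) (s a * s b).
Proof.
move=> /dvdnP[d ->].
have [h def_sda] := lucas_rdvd_mul a d.
have [g def_rem] := lucas_mul_cong (d * a) c.
by exists (g * h); rewrite def_rem def_sda; ring.
Qed.

Lemma lucas_green_dvd (a b m : nat) : (a %| b)%N -> (b %| m)%N ->
  exists q : D, q * s (gcdn a b) = s a * s b /\
    rcong (s m) ((m %/ lcmn a b)%N%:R * q) (s a * s b).
Proof.
move=> ab bm; exists (s b).
rewrite (gcdn_idPl ab) (lcmn_idPr ab) mulrC; split=> //.
by rewrite -{1}(divnK bm); apply: lucas_mul_cong_dvd.
Qed.

End LucasCongruence.

Theorem corollary5p14 (D : comPzRingType) (s : nat -> D) :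
  Lucasian s -> PGreen s.
Proof.
move=> [[s0 _ _] lucas] p k a b pp ha hb.
wlog ab : a b ha hb / (a %| b)%N => [hwlog|].
  have /orP[ab | ba] := dvdn_pfactor_total pp ha hb; first exact: hwlog.
  have [q [def_q cong]] := hwlog b a hb ha ba.
  by exists q; rewrite gcdnC lcmnC [s a * s b]mulrC.
exact: lucas_green_dvd.
Qed.
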